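(* Let $L\in\mathsf{NTIME}(t(n),p(n))$ and let $V$ be a time-$O(t(n))$ verifier for $L$ using size-$O(p(n))$ certificates. Then $\mathrm{Ldim}(\mathcal{C}_{L,V})=1$.
   Context: Here $t(n),p(n)\ge n$ are growth functions. $\mathsf{NTIME}(t,p)$: languages decided by a time-$O(t(n))$ verifier with size-$O(p(n))$ certificates. Fixed code: polynomial-time $\mathrm{Enc}:\{0,1\}^k\to\{0,1\}^{ck}$, $\mathrm{Dec}$, constants $c>1$, $\varepsilon^\star>0$. For $z\in\{0,1\}^n$, $\textsc{Cert}_z:\{0,1\}^{n+\log(cp(n))}\to\{0,1\}$ is constant $0$ if $z\notin L$; otherwise with $w^\star\in\{0,1\}^{p(n)}$ the lexicographically first certificate with $V(z,w^\star)=1$, $\textsc{Cert}_z(x)=\mathrm{Enc}(w^\star)_i$ if $x=(z,i)$ ($i$ read as an index in $\{1,\dots,cp(n)\}$), else $0$; $\mathcal{C}_{L,V}=\{\textsc{Cert}_z:z\in\{0,1\}^n\}$. $\mathrm{Ldim}(\mathcal{C})$ (Littlestone dimension) is the optimal worst-case number of mistakes of an online learner for $\mathcal{C}$ (each round: adversary presents $x$, learner predicts, true label $f(x)$ of a fixed target $f\in\mathcal{C}$ revealed). *)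

From mathcomp Require Import all_boot.
Set Implicit Arguments. Unset Strict Implicit. Unset Printing Implicit Defensive.

(* A (deterministic) online learner over domain X: given the history of
   labelled examples seen so far and the current point, it predicts a label. *)
Definition learner (X : Type) := seq (X * bool) -> X -> bool.

Fixpoint mistakes_from (X : Type) (A : learner X) (f : X -> bool)
    (h : seq (X * bool)) (xs : seq X) : nat :=
  match xs with
  | [::] => 0
  | x :: xs' => (A h x != f x) + mistakes_from A f (rcons h (x, f x)) xs'
  end.

Definition mistakes (X : Type) (A : learner X) (f : X -> bool) (xs : seq X) :=
  mistakes_from A f [::] xs.

(* Ldim C = d : d is the optimal worst-case number of mistakes of an online
   learner for C: some learner never makes more than d mistakes on any target
   in C and any sequence of rounds, and every learner can be forced to make at
   least d mistakes. *)
Definition Ldim_eq (X : Type) (C : (X -> bool) -> Prop) (d : nat) : Prop :=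
  (exists A : learner X, forall f, C f -> forall xs, mistakes A f xs <= d) /\
  (forall A : learner X, exists f xs, C f /\ d <= mistakes A f xs).

Fixpoint lexle (s t : seq bool) : bool :=
  match s, t with
  | [::], _ => true
  | _ :: _, [::] => false
  | a :: s', b :: t' => (a < b) || ((a == b) && lexle s' t')
  end.

Definition bin (s : seq bool) : nat := foldl (fun (acc : nat) (b : bool) => (acc.*2 + nat_of_bool b)%N) 0 s.

Definition idxbits (p : nat -> nat) (c n : nat) : nat := up_log 2 (c * p n).

Definition wstar (p : nat -> nat) (V : seq bool -> seq bool -> bool) (n : nat)
    (z : n.-tuple bool) : option ((p n).-tuple bool) :=
  [pick w : (p n).-tuple bool |
     V z w && [forall w' : (p n).-tuple bool, V z w' ==> lexle w w']].

(* A point x is read as x = (z', j)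
   with z' its first n bits and j the number written (in binary) by its last
   log(c p(n)) bits; Cert_z(x) = Enc(w_star)_j (0-indexed) if z' = z and j is a valid
   index (j < c p(n)), and 0 otherwise; Cert_z is constantly 0 if z \notin L. *)
Definition Cert (p : nat -> nat) (c : nat) (Enc : seq bool -> seq bool)
    (L : pred (seq bool)) (V : seq bool -> seq bool -> bool) (n : nat)
    (z : n.-tuple bool) (x : (n + idxbits p c n).-tuple bool) : bool :=
  if L z then
    match wstar p V z with
    | Some w =>
        (take n x == z :> seq bool) &&
        (bin (drop n x) < c * p n) && nth false (Enc w) (bin (drop n x))
    | None => false
    end
  else false.

Definition CertClass (p : nat -> nat) (c : nat) (Enc : seq bool -> seq bool)
    (L : pred (seq bool)) (V : seq bool -> seq bool -> bool) (n : nat)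
    (f : (n + idxbits p c n).-tuple bool -> bool) : Prop :=
  exists z : n.-tuple bool, f = @Cert p c Enc L V n z.

From mathcomp Require Import all_boot.

(* The functions Cert_z have pairwise disjoint supports, since Cert_z x forces
   the first n bits of x to be z.  For such a class the learner that answers 1
   exactly when x lies in the support of the member containing some positive
   example already seen errs at most once: before its first positive example it
   answers 0 and can only be wrong on that example, afterwards it knows the
   target.  Conversely, one member takes value 1 at some x and any other member
   is 0 there, so one of the two forces a mistake on x. *)

Set Implicit Arguments.
Unset Strict Implicit.
Unset Printing Implicit Defensive.

Lemma Ldim_ge1_of_disagree (X : Type) (C : (X -> bool) -> Prop) f g x :
  C f -> C g -> f x != g x ->
  forall A : learner X, exists h xs, C h /\ 1 <= mistakes A h xs.
Proof.
move=> Cf Cg fg A.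
have [Afx | Afx] := eqVneq (A [::] x) (f x).
- by exists g, [:: x]; rewrite /mistakes /= Afx fg.
- by exists f, [:: x]; rewrite /mistakes /= Afx.
Qed.

Section DisjointSupports.
Variables (X : eqType) (I : finType) (F : I -> X -> bool).
Hypothesis F_disjoint : forall i j x, F i x -> F j x -> i = j.

Definition disjoint_support_learner : learner X := fun h x =>
  has (fun q => q.2 && [exists i, F i q.1 && F i x]) h.

Local Notation A := disjoint_support_learner.

Definition labelled_by (i : I) (h : seq (X * bool)) :=
  forall q, q \in h -> q.2 = F i q.1.

Lemma labelled_by_rcons i h x :
  labelled_by i h -> labelled_by i (rcons h (x, F i x)).
Proof. by move=> hi q; rewrite mem_rcons in_cons => /predU1P [-> | /hi]. Qed.

Lemma disjoint_support_learnerE i h x :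
  labelled_by i h -> A h x = has snd h && F i x.
Proof.
move=> hi; apply/hasP/andP.
- case=> q qh /andP [q2 /existsP [j /andP [Fjq Fjx]]].
  have Fiq : F i q.1 by rewrite -hi.
  by rewrite (F_disjoint Fiq Fjq); split; first by apply/hasP; exists q.
- case=> /hasP [q qh q2] Fix; exists q => //.
  by rewrite q2; apply/existsP; exists i; rewrite -hi // q2 Fix.
Qed.

Lemma disjoint_support_mistakes_from i h xs :
  labelled_by i h -> mistakes_from A (F i) h xs <= ~~ has snd h.
Proof.
elim: xs h => [//|x xs IH] h hi /=.
have := IH _ (labelled_by_rcons (x := x) hi).
rewrite has_rcons (disjoint_support_learnerE x hi).
by case: (has snd h); case: (F i x); rewrite ?eqxx //= leqn0 => /eqP ->.
Qed.

Lemma disjoint_support_mistakes_le1 i xs : mistakes A (F i) xs <= 1.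
Proof. exact: disjoint_support_mistakes_from. Qed.

End DisjointSupports.

Lemma map_negb_tuple_neq n (z : n.-tuple bool) : 0 < n -> map_tuple negb z != z.
Proof.
move=> n_gt0; apply/eqP => /(congr1 (fun t : n.-tuple bool => tnth t (Ordinal n_gt0))).
by rewrite tnth_map; case: (tnth z _).
Qed.

Section CertSupports.
Variables (p : nat -> nat) (c : nat) (Enc : seq bool -> seq bool)
  (L : pred (seq bool)) (V : seq bool -> seq bool -> bool) (n : nat).

Local Notation Cert := (@Cert p c Enc L V n).

Lemma take_Cert z x : Cert z x -> take n x = z.
Proof.
rewrite /Cert; case: (L z) => //; case: (wstar p V z) => // w.
by case/andP => /andP [/eqP -> _] _.
Qed.

Lemma Cert_disjoint z z' x : Cert z x -> Cert z' x -> z = z'.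
Proof. by move=> /take_Cert zx /take_Cert z'x; apply: val_inj; rewrite /= -zx. Qed.

End CertSupports.

Theorem claim25 (p : nat -> nat) (c : nat) (Enc : seq bool -> seq bool)
    (L : pred (seq bool)) (V : seq bool -> seq bool -> bool) (n : nat) :
  (forall m, m <= p m) ->
  1 < c ->
  (forall w, size (Enc w) = c * size w) ->
  (forall z : seq bool, L z <-> exists w : seq bool, size w = p (size z) /\ V z w) ->
  0 < n ->
  (exists (z : n.-tuple bool) x, @Cert p c Enc L V n z x) ->
  Ldim_eq (@CertClass p c Enc L V n) 1.
Proof.
move=> _ _ _ _ n_gt0 [z [x Czx]]; split.
- exists (disjoint_support_learner (@Cert p c Enc L V n)) => _ [z' ->] xs.
  by apply: disjoint_support_mistakes_le1; apply: Cert_disjoint.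
- pose z' := map_tuple negb z.
  have Cz'x : ~~ @Cert p c Enc L V n z' x.
    apply/negP => /(Cert_disjoint Czx) zz'.
    by move: (map_negb_tuple_neq z n_gt0); rewrite -/z' -zz' eqxx.
  apply: (@Ldim_ge1_of_disagree _ _ _ _ x); [by exists z | by exists z' |].
  by rewrite Czx.
Qed.
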